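(* Let $n \ge 2$ and let $Q(x) = x_1x_2 + x_3x_4 + \cdots + x_{2n-1}x_{2n}$ be the hyperbolic quadratic form on $V(2n,2)$, with associated symmetric bilinear form $B(x,y) = Q(x+y)-Q(x)-Q(y)$ and orthogonality $\perp$ with respect to $B$. Let $\Pi$ and $\Sigma$ be two totally singular $n$-dimensional subspaces with $\Pi \cap \Sigma = 0$. For a non-singular point $X = \langle x\rangle$ (i.e. $Q(x) \neq 0$), put $G = X^\perp \cap \Pi$, $H = X^\perp \cap \Sigma$, and let $P = G^\perp \cap \Sigma$; define $f(X) = (P,H)$. Then $P$ is a $1$-dimensional subspace of $\Sigma$, $H$ is an $(n-1)$-dimensional subspace of $\Sigma$, and $P \not\subseteq H$, i.e. $f(X)$ is a point-hyperplane antiflag of $\Sigma \cong V(n,2)$.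
   Context: Subspaces are taken in the vector-space sense: points are $1$-dimensional subspaces, hyperplanes of $\Sigma$ are its $(n-1)$-dimensional subspaces. A point $\langle x\rangle$ is singular if $Q(x)=0$; a subspace is totally singular if all its points are singular. A point-hyperplane antiflag of a vector space $V$ is a pair $(P,H)$ with $P$ a $1$-dimensional subspace, $H$ a hyperplane, and $P \not\subseteq H$. *)

From HB Require Import structures.
From mathcomp Require Import all_boot all_order all_algebra.
Set Implicit Arguments. Unset Strict Implicit. Unset Printing Implicit Defensive.
Import GRing.Theory.
Local Open Scope ring_scope.

(* The ambient space V(2n,2) is 'rV['F_2]_(n.*2); coordinates x_1..x_{2n}
   correspond to indices 0..2n-1. *)
Notation V2 n := 'rV['F_2]_(n.*2).

Definition coordn (R : Type) (r0 : R) m (x : 'rV[R]_m) (k : nat) : R :=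
  match @insub nat (fun k => k < m)%N _ k with
  | Some i => x 0 i
  | None => r0
  end.

Definition hypQ (n : nat) (x : V2 n) : 'F_2 :=
  \sum_(i < n) coordn 0 x i.*2 * coordn 0 x i.*2.+1.

Definition hypB (n : nat) (x y : V2 n) : 'F_2 :=
  hypQ (x + y) - hypQ x - hypQ y.

Definition Bfun (n : nat) (u : V2 n) : 'Hom(V2 n, ('F_2)^o) :=
  linfun (fun y : V2 n => (hypB u y : ('F_2)^o)).

(* orthogonal complement U^perp w.r.t. B: the vectors orthogonal to every
   vector of a basis of U (equivalently, by bilinearity of B, to all of U) *)
Definition perp (n : nat) (U : {vspace V2 n}) : {vspace V2 n} :=
  (\bigcap_(u <- vbasis U) lker (Bfun u))%VS.

Definition totally_singular (n : nat) (U : {vspace V2 n}) : Prop :=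
  forall v, v \in U -> hypQ v = 0.

(* Since Pi and Sigma are complementary, x = a + s with a in Pi and s in Sigma,
   and B(a, s) = Q(x) <> 0 because both subspaces are totally singular; hence
   B(x, a) and B(x, s) are nonzero, so G and H are hyperplanes of Pi and Sigma
   and Pi = G + <a>.  A vector p of P :&: H is orthogonal to G, to Sigma and to
   a (as B(x, p) = B(s, p) = 0), hence to Pi + Sigma = V, so p = 0 because B is
   nondegenerate.  Therefore dim P <= n - dim H = 1, while
   dim P >= dim G^perp + dim Sigma - 2n >= (n + 1) + n - 2n = 1. *)

From HB Require Import structures.
From mathcomp Require Import all_boot all_order all_algebra.
From mathcomp Require Import ring zify.
Set Implicit Arguments. Unset Strict Implicit. Unset Printing Implicit Defensive.
Import GRing.Theory.
Local Open Scope ring_scope.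

Section LinearForms.
Variables (K : fieldType) (vT : vectType K).
Implicit Types (U W : {vspace vT}) (f : 'Hom(vT, K^o)).

Lemma dimv_img_form f U : (\dim (f @: U) <= 1)%N.
Proof. by rewrite -[1%N](dimvf K^o) dimvS ?subvf. Qed.

Lemma dimv_cap_lker_ge f U : ((\dim U).-1 <= \dim (U :&: lker f))%N.
Proof. by rewrite -(limg_ker_dim f U); have := dimv_img_form f U; lia. Qed.

Lemma dimv_cap_lker f U u :
  u \in U -> f u != 0 -> \dim (U :&: lker f) = (\dim U).-1.
Proof.
move=> Uu fu_neq0; have img1 : \dim (f @: U) = 1%N.
  apply/eqP; rewrite eqn_leq dimv_img_form lt0n dimv_eq0.
  by apply: contraNneq fu_neq0 => fU0; rewrite -memv0 -fU0 memv_img.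
by rewrite -(limg_ker_dim f U) img1 addn1.
Qed.

Lemma memv_bigcap_lker (I : Type) (g : I -> 'Hom(vT, K^o)) (s : seq I) v :
  (v \in \bigcap_(i <- s) lker (g i))%VS = all (fun i => g i v == 0) s.
Proof.
elim: s => [|i s IHs]; first by rewrite big_nil memvf.
by rewrite big_cons memv_cap memv_ker IHs.
Qed.

Lemma dimv_bigcap_lker (I : Type) (g : I -> 'Hom(vT, K^o)) (s : seq I) :
  (\dim {:vT} <= \dim (\bigcap_(i <- s) lker (g i)) + size s)%N.
Proof.
elim: s => [|i s IHs]; first by rewrite big_nil addn0.
rewrite big_cons capvC /=.
by have := dimv_cap_lker_ge (g i) (\bigcap_(j <- s) lker (g j)); lia.
Qed.

Lemma addv_cap_lker_line f U u :
  u \in U -> f u != 0 -> (U :&: lker f + <[u]>)%VS = U.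
Proof.
move=> Uu fu_neq0; apply/eqP; rewrite eqEsubv subv_add capvSl -memvE Uu /=.
apply/subvP => v Uv; apply/memv_addP.
exists (v - (f v / f u) *: u); last first.
  by exists ((f v / f u) *: u); rewrite ?memvZ ?memv_line ?subrK.
rewrite memv_cap rpredB ?rpredZ //= memv_ker linearB linearZ /=.
by rewrite /GRing.scale /= divfK // subr_eq0.
Qed.

Lemma addv_eq_fullv U W :
  (U :&: W = 0)%VS -> (\dim U + \dim W)%N = \dim {:vT} -> (U + W)%VS = fullv.
Proof.
move=> UW0 dimUW; apply/eqP.
by rewrite eqEdim subvf -dimUW -dimv_sum_cap UW0 dimv0 addn0 /=.
Qed.

End LinearForms.

Definition partner (k : nat) : nat := if odd k then k.-1 else k.+1.

Lemma partnerK : involutive partner.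
Proof. by move=> k; rewrite /partner; do 2 case: ifP; lia. Qed.

Section HyperbolicForm.
Variable n : nat.
Implicit Types (x y u v : V2 n) (U W : {vspace V2 n}).

Local Notation c x k := (coordn 0 x k).

Lemma coordnD x y k : c (x + y) k = c x k + c y k.
Proof. by rewrite /coordn; case: insubP => [i _ _|_]; rewrite ?mxE ?addr0. Qed.

Lemma coordnZ (a : 'F_2) x k : c (a *: x) k = a * c x k.
Proof. by rewrite /coordn; case: insubP => [i _ _|_]; rewrite ?mxE ?mulr0. Qed.

Lemma coordn_ord x (k : 'I_(n.*2)) : c x k = x 0 k.
Proof. by rewrite /coordn; case: insubP => [i _ /val_inj -> //|]; rewrite ltn_ord. Qed.

Lemma coordn_delta (j : 'I_(n.*2)) k : c (delta_mx 0 j : V2 n) k = (k == j)%:R.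
Proof.
rewrite /coordn; case: insubP => [i _ <-|k_out]; first by rewrite mxE eqxx.
by case: eqP k_out => // ->; rewrite ltn_ord.
Qed.

Lemma partner_ord (k : 'I_(n.*2)) : (partner k < n.*2)%N.
Proof. by have := ltn_ord k; rewrite /partner; case: ifP; lia. Qed.

Lemma hypBE x y :
  hypB x y = \sum_(i < n) (c x i.*2 * c y i.*2.+1 + c y i.*2 * c x i.*2.+1).
Proof.
rewrite /hypB /hypQ -!sumrB; apply: eq_bigr => i _.
rewrite !coordnD; ring.
Qed.

Lemma hypBC x y : hypB x y = hypB y x.
Proof. by rewrite /hypB [x + y]addrC addrAC. Qed.

Lemma hypB_delta (j : 'I_(n.*2)) y : hypB (delta_mx 0 j) y = c y (partner j).
Proof.
have j2_lt : (j./2 < n)%N by have := ltn_ord j; lia.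
rewrite hypBE (bigD1 (Ordinal j2_lt)) //= big1 => [|i /eqP i_neq]; last first.
  rewrite !coordn_delta; have [-> ->] : (i.*2 == j) = false /\ (i.*2.+1 == j) = false.
    by split; apply/eqP => ij; apply: i_neq; apply: val_inj => /=; lia.
  by rewrite mul0r mulr0 addr0.
rewrite !coordn_delta addr0 /partner.
case: ifP => odd_j.
  have [-> ->] : (j./2.*2 == j) = false /\ (j./2.*2.+1 == j) by split; lia.
  by rewrite mul0r add0r mulr1; congr (c y _); lia.
have [-> ->] : (j./2.*2 == j) /\ (j./2.*2.+1 == j) = false by split; lia.
by rewrite mul1r mulr0 addr0; congr (c y _); lia.
Qed.

Lemma hypB_nondegenerate x : (forall y, hypB y x = 0) -> x = 0.
Proof.
move=> x_orth; apply/rowP => k; rewrite mxE -coordn_ord.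
by rewrite -(partnerK k) -[partner k]/(val (Ordinal (partner_ord k))) -hypB_delta.
Qed.

Lemma hypB_linear u : linear (fun y : V2 n => hypB u y : ('F_2)^o).
Proof.
move=> a y z; rewrite !hypBE /GRing.scale /= mulr_sumr -big_split /=.
by apply: eq_bigr => i _; rewrite !coordnD !coordnZ; ring.
Qed.

Definition hypBr u : V2 n -> ('F_2)^o := fun y => hypB u y.
HB.instance Definition _ u := GRing.isLinear.Build _ _ _ _ (hypBr u) (hypB_linear u).

Lemma BfunE u y : Bfun u y = hypB u y.
Proof. exact: (lfunE (hypBr u)). Qed.

Lemma hypBDl u v y : hypB (u + v) y = hypB u y + hypB v y.
Proof. by rewrite !(hypBC _ y) -!BfunE raddfD. Qed.

Lemma hypB_totally_singular U u v :
  totally_singular U -> u \in U -> v \in U -> hypB u v = 0.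
Proof. by move=> TU Uu Uv; rewrite /hypB !TU ?rpredD ?subr0. Qed.

Lemma memv_perp U v : (v \in perp U) = (U <= lker (Bfun v))%VS.
Proof.
rewrite /perp memv_bigcap_lker.
apply/allP/idP => [orth_v | /subvP U_ker u /vbasis_mem Uu].
  rewrite -(span_basis (vbasisP U)); apply/span_subvP => u /orth_v.
  by rewrite memv_ker !BfunE hypBC.
by rewrite BfunE hypBC -BfunE -memv_ker U_ker.
Qed.

Lemma perp_line u : perp <[u]> = lker (Bfun u).
Proof. by apply/vspaceP => v; rewrite memv_perp -memvE !memv_ker !BfunE hypBC. Qed.

Lemma perp_addv U W : perp (U + W) = (perp U :&: perp W)%VS.
Proof. by apply/vspaceP => v; rewrite memv_cap !memv_perp subv_add. Qed.

Lemma perp_fullv : perp {:V2 n} = 0%VS.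
Proof.
apply/vspaceP => v; rewrite memv_perp memv0; apply/idP/eqP => [|->].
  move/subvP=> orth_v; apply: hypB_nondegenerate => y.
  by have := orth_v y (memvf y); rewrite memv_ker BfunE hypBC => /eqP.
by apply/subvP => y _; rewrite memv_ker BfunE hypBC -BfunE linear0.
Qed.

Lemma totally_singular_perp U : totally_singular U -> (U <= perp U)%VS.
Proof.
move=> TU; apply/subvP => v Uv; rewrite memv_perp; apply/subvP => u Uu.
by rewrite memv_ker BfunE (hypB_totally_singular TU).
Qed.

Lemma dimV2 : \dim {:V2 n} = n.*2.
Proof. by rewrite dimvf dim_matrix mul1r. Qed.

Lemma dim_perp U : (n.*2 <= \dim (perp U) + \dim U)%N.
Proof. by have := dimv_bigcap_lker (@Bfun n) (vbasis U); rewrite size_tuple dimV2. Qed.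

End HyperbolicForm.

Section Antiflag.
Variables (n : nat) (Pi Sigma : {vspace V2 n}) (a s : V2 n).
Hypotheses (n_gt0 : (0 < n)%N).
Hypotheses (TPi : totally_singular Pi) (TSigma : totally_singular Sigma).
Hypotheses (dimPi : \dim Pi = n) (dimSigma : \dim Sigma = n).
Hypothesis Pi_Sigma_full : (Pi + Sigma)%VS = fullv.
Hypotheses (Pi_a : a \in Pi) (Sigma_s : s \in Sigma).
Hypothesis Q_neq0 : hypQ (a + s) != 0.

Local Notation x := (a + s).
Local Notation G := (perp <[x]> :&: Pi)%VS.
Local Notation H := (perp <[x]> :&: Sigma)%VS.
Local Notation P := (perp G :&: Sigma)%VS.

Lemma hypB_a_s : hypB a s = hypQ x.
Proof. by rewrite /hypB (TPi Pi_a) (TSigma Sigma_s) !subr0. Qed.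

Lemma hypB_x_a : hypB x a != 0.
Proof. by rewrite hypBDl (hypB_totally_singular TPi Pi_a Pi_a) add0r hypBC hypB_a_s. Qed.

Lemma hypB_x_s : hypB x s != 0.
Proof. by rewrite hypBDl (hypB_totally_singular TSigma Sigma_s Sigma_s) addr0 hypB_a_s. Qed.

Lemma dim_G : \dim G = n.-1.
Proof. by rewrite perp_line capvC (dimv_cap_lker Pi_a) ?dimPi // BfunE hypB_x_a. Qed.

Lemma dim_H : \dim H = n.-1.
Proof. by rewrite perp_line capvC (dimv_cap_lker Sigma_s) ?dimSigma // BfunE hypB_x_s. Qed.

Lemma G_add_line : (G + <[a]>)%VS = Pi.
Proof. by rewrite perp_line capvC addv_cap_lker_line // BfunE hypB_x_a. Qed.

Lemma cap_P_H : (P :&: H)%VS = 0%VS.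
Proof.
apply/eqP; rewrite -subv0; apply/subvP => p.
rewrite !memv_cap => /andP[/andP[G_p Sigma_p] /andP[x_p _]].
have a_p : hypB a p = 0.
  move: x_p; rewrite perp_line memv_ker BfunE hypBDl.
  by rewrite (hypB_totally_singular TSigma Sigma_s Sigma_p) addr0 => /eqP.
have Pi_p : p \in perp Pi.
  by rewrite -G_add_line perp_addv memv_cap G_p perp_line memv_ker BfunE a_p /=.
rewrite -(perp_fullv n) -Pi_Sigma_full perp_addv memv_cap Pi_p.
exact: (subvP (totally_singular_perp TSigma)).
Qed.

Lemma dim_P : \dim P = 1%N.
Proof.
have sum_PH := dimv_sum_cap P H; rewrite cap_P_H dimv0 addn0 dim_H in sum_PH.
have PH_le : (\dim (P + H) <= n)%N.
  by rewrite -[X in (_ <= X)%N]dimSigma dimvS // subv_add !capvSr.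
have sum_GS := dimv_sum_cap (perp G) Sigma; rewrite dimSigma in sum_GS.
have GS_le : (\dim (perp G + Sigma) <= n.*2)%N.
  by rewrite -[X in (_ <= X)%N]dimV2 dimvS ?subvf.
have perpG_ge := dim_perp G; rewrite dim_G in perpG_ge.
lia.
Qed.

Lemma P_notsub_H : ~~ (P <= H)%VS.
Proof. by apply/negP => /capv_idPl PH; have := dim_P; rewrite -PH cap_P_H dimv0. Qed.

End Antiflag.

Theorem mainTheorem1 (n : nat) (Pi Sigma : {vspace V2 n}) (x : V2 n) :
  (2 <= n)%N ->
  totally_singular Pi -> totally_singular Sigma ->
  \dim Pi = n -> \dim Sigma = n ->
  (Pi :&: Sigma = 0)%VS ->
  hypQ x != 0 ->
  let X := <[x]>%VS in
  let G := (perp X :&: Pi)%VS in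
  let H := (perp X :&: Sigma)%VS in
  let P := (perp G :&: Sigma)%VS in
  [/\ (P <= Sigma)%VS, \dim P = 1%N,
      (H <= Sigma)%VS, \dim H = n.-1
    & ~~ (P <= H)%VS].
Proof.
move=> n_ge2 TPi TSigma dimPi dimSigma Pi_Sigma0 Q_neq0 X G H P.
have n_gt0 : (0 < n)%N by apply: leq_trans n_ge2.
have Pi_Sigma_full : (Pi + Sigma)%VS = fullv.
  by apply: addv_eq_fullv; rewrite // dimPi dimSigma dimV2 addnn.
have /memv_addP[a Pi_a [s Sigma_s x_as]] : x \in (Pi + Sigma)%VS.
  by rewrite Pi_Sigma_full memvf.
rewrite {}/P {}/H {}/G {}/X {}x_as in Q_neq0 *.
split; rewrite ?capvSr //.
- exact: dim_P.
- exact: (dim_H (Pi := Pi)).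
- exact: P_notsub_H.
Qed.
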